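(* Let $V$ be a real vector space, $C$ a convex cone in $V$ and $Y$ a decomposably $C$-antichain-convex subset of $V$. (1) $\mathcal{O}(C,\operatorname{co}(Y))\subseteq\mathcal{O}(C,Y)$. (2) If $C$ is pointed, then $\mathcal{O}(C,Y)=\mathcal{O}(C,\operatorname{co}(Y))$.
   Context: A cone in $V$ is a subset $C$ with $\lambda C\subseteq C$ for all $\lambda>0$ (possibly empty, need not contain $0$); it is pointed iff $C\cap(-C)\subseteq\{0\}$. $S\subseteq V$ is $C$-antichain-convex iff for all $x,y\in S$ and $\lambda\in[0,1]$ with $y-x\notin C\cup(-C)$ one has $\lambda x+(1-\lambda)y\in S$; $S$ is decomposably $C$-antichain-convex iff $S=S_1+\dots+S_n$ (Minkowski sum) for finitely many $C$-antichain-convex $S_i\subseteq V$. For $Z\subseteq V$, $y\in Z$ is a $C$-Pareto optimum of $Z$ iff $(Z\setminus\{y\})\cap(y+C)=\emptyset$; $\mathcal{O}(C,Z)$ is the set of $C$-Pareto optima of $Z$. $\operatorname{co}$ denotes convex hull. *)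

From mathcomp Require Import all_boot all_order all_algebra.
From mathcomp Require Import reals.
Set Implicit Arguments. Unset Strict Implicit. Unset Printing Implicit Defensive.
Import Order.TTheory GRing.Theory Num.Theory.
Local Open Scope ring_scope.

Section Defs.
Variables (R : realType) (V : lmodType R).

(* cone: lambda C \subseteq C for all lambda > 0 (may be empty, need not contain 0) *)
Definition is_cone (C : V -> Prop) : Prop :=
  forall x, C x -> forall l : R, 0 < l -> C (l *: x).

Definition is_convex (S : V -> Prop) : Prop :=
  forall x y, S x -> S y -> forall l : R, 0 <= l <= 1 ->
    S (l *: x + (1 - l) *: y).

Definition is_convex_cone (C : V -> Prop) : Prop := is_cone C /\ is_convex C.

Definition is_pointed (C : V -> Prop) : Prop :=
  forall x, C x -> C (- x) -> x = 0.

Definition antichain_convex (C S : V -> Prop) : Prop :=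
  forall x y, S x -> S y -> ~ C (y - x) -> ~ C (- (y - x)) ->
    forall l : R, 0 <= l <= 1 -> S (l *: x + (1 - l) *: y).

Definition minkowski_sum (n : nat) (S : 'I_n -> V -> Prop) : V -> Prop :=
  fun v => exists p : 'I_n -> V, (forall i, S i (p i)) /\ v = \sum_(i < n) p i.

Definition decomp_antichain_convex (C S : V -> Prop) : Prop :=
  exists (n : nat) (Si : 'I_n -> V -> Prop),
    (forall i, antichain_convex C (Si i)) /\
    (forall v, S v <-> minkowski_sum Si v).

Definition conv_hull (Y : V -> Prop) : V -> Prop :=
  fun v => exists (n : nat) (p : 'I_n -> V) (w : 'I_n -> R),
    (forall i, Y (p i)) /\ (forall i, 0 <= w i) /\ \sum_(i < n) w i = 1 /\
    v = \sum_(i < n) w i *: p i.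

Definition pareto_opt (C Z : V -> Prop) (y : V) : Prop :=
  Z y /\ forall z, Z z -> z <> y -> ~ (exists c, C c /\ z = y + c).

End Defs.

(* Write [x <= y] for [y - x \in C \cup {0}]. The heart of the proof is that
   every point of [co(Y)] is dominated by a point of [Y]. For a single
   antichain-convex summand [S] this follows by merging the points of a convex
   combination two at a time: two comparable points are replaced by the larger
   one, two incomparable ones by their (weighted) midpoint, which lies in [S];
   a convex combination of points of the Minkowski sum [S_1 + ... + S_n] is
   handled summand by summand. Domination then transfers Pareto optimality
   between [Y] and [co(Y)]; pointedness is needed to exclude [z = y + c] with
   [y - z] also in [C]. *)
From mathcomp Require Import all_boot all_order all_algebra.
From mathcomp Require Import reals.
From mathcomp Require Import ring lra.
From Stdlib Require Import Classical.
Set Implicit Arguments. Unset Strict Implicit. Unset Printing Implicit Defensive.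
Import Order.TTheory GRing.Theory Num.Theory.
Local Open Scope ring_scope.

Section ConeOrder.
Variables (R : realType) (V : lmodType R) (C : V -> Prop).
Hypothesis convC : is_convex_cone C.

Definition cone0 (d : V) : Prop := d = 0 \/ C d.

Lemma convex_coneD a b : C a -> C b -> C (a + b).
Proof.
move=> Ca Cb.
have half01 : 0 <= (2^-1 : R) <= 1 by apply/andP; split; lra.
have two_gt0 : (0 : R) < 2 by lra.
have := convC.1 _ (convC.2 a b Ca Cb _ half01) 2 two_gt0.
rewrite scalerDr !scalerA mulfV ?pnatr_eq0 // (_ : 2 * (1 - 2^-1) = 1) ?scale1r //.
by field.
Qed.

Lemma cone0D a b : cone0 a -> cone0 b -> cone0 (a + b).
Proof.
case=> [->|Ca]; first by rewrite add0r.
case=> [->|Cb]; first by rewrite addr0; right.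
by right; apply: convex_coneD.
Qed.

Lemma cone0_sum n (F : 'I_n -> V) : (forall i, cone0 (F i)) -> cone0 (\sum_i F i).
Proof. by move=> F0; apply: big_ind => //; [left | apply: cone0D]. Qed.

Lemma cone0Z k d : 0 <= k -> C d -> cone0 (k *: d).
Proof.
move=> k_ge0 Cd; have [->|k_neq0] := eqVneq k 0; first by left; rewrite scale0r.
by right; apply: convC.1; rewrite // lt0r k_neq0.
Qed.

Lemma cone0_trans u v s t : cone0 (u - (v + t)) -> cone0 (v - s) -> cone0 (u - (s + t)).
Proof.
move=> /cone0D h /h.
by rewrite addrACA -opprD -[v + t + s]addrA addrKA (addrC t).
Qed.

Variable S : V -> Prop.
Hypothesis acS : antichain_convex C S.

Lemma antichain_convex_merge x y (w0 w1 : R) : S x -> S y -> 0 <= w0 -> 0 <= w1 ->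
  exists2 a, S a & cone0 ((w0 + w1) *: a - (w0 *: x + w1 *: y)).
Proof.
move=> Sx Sy w0_ge0 w1_ge0.
case: (classic (C (y - x))) => [Cyx|nCyx].
  exists y => //; rewrite scalerDl opprD addrACA subrr addr0 -scalerBr.
  exact: cone0Z.
case: (classic (C (- (y - x)))) => [Cxy|nCxy].
  exists x => //; rewrite scalerDl opprD addrACA subrr add0r -scalerBr -opprB.
  exact: cone0Z.
have [w_eq0|w_neq0] := eqVneq (w0 + w1) 0.
  have [-> ->] : w0 = 0 /\ w1 = 0 by split; lra.
  by exists x => //; left; rewrite addr0 !scale0r addr0 subrr.
have w_gt0 : 0 < w0 + w1 by rewrite lt0r w_neq0 addr_ge0.
pose l := w0 / (w0 + w1).
exists (l *: x + (1 - l) *: y).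
  apply: acS => //; apply/andP; split; first by rewrite divr_ge0 // addr_ge0.
  by rewrite ler_pdivrMr // mul1r lerDl.
left; rewrite scalerDr !scalerA.
have -> : (w0 + w1) * l = w0 by rewrite /l; field; lra.
have -> : (w0 + w1) * (1 - l) = w1 by rewrite /l; field; lra.
exact: subrr.
Qed.

Lemma antichain_convex_combination m (x : 'I_m.+1 -> V) (w : 'I_m.+1 -> R) :
  (forall j, S (x j)) -> (forall j, 0 <= w j) ->
  exists2 a, S a & cone0 ((\sum_j w j) *: a - \sum_j w j *: x j).
Proof.
elim: m x w => [|m IHm] x w Sx w_ge0.
  by exists (x ord0) => //; left; rewrite !big_ord1 subrr.
have [a Sa le_a] := IHm (x \o widen_ord (leqnSn _)) (w \o widen_ord (leqnSn _))
  (fun=> Sx _) (fun=> w_ge0 _).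
have W_ge0 : 0 <= \sum_j (w \o widen_ord (leqnSn _)) j.
  by apply: sumr_ge0 => j _; apply: w_ge0.
have [b Sb le_b] := antichain_convex_merge Sa (Sx ord_max) W_ge0 (w_ge0 ord_max).
exists b => //; rewrite !(big_ord_recr m.+1) /=.
exact: cone0_trans le_b le_a.
Qed.

End ConeOrder.

Section Domination.
Variables (R : realType) (V : lmodType R) (C : V -> Prop).
Hypothesis convC : is_convex_cone C.

Lemma minkowski_sum_combination n (S : 'I_n -> V -> Prop) m
    (P : 'I_m.+1 -> 'I_n -> V) (w : 'I_m.+1 -> R) :
  (forall i, antichain_convex C (S i)) -> (forall j i, S i (P j i)) ->
  (forall j, 0 <= w j) -> \sum_j w j = 1 ->
  exists2 p : 'I_n -> V, (forall i, S i (p i)) &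
    cone0 C (\sum_i p i - \sum_j w j *: \sum_i P j i).
Proof.
move=> acS SP w_ge0 w_sum1.
have [p Sp le_p] := fin_all_exists2 (fun i =>
  antichain_convex_combination convC (acS i) (fun j => SP j i) w_ge0).
exists p => //.
have -> : \sum_j w j *: \sum_i P j i = \sum_i \sum_j w j *: P j i.
  by rewrite exchange_big; apply: eq_bigr => j _; rewrite scaler_sumr.
rewrite -sumrB; apply: (cone0_sum convC) => i.
by move: (le_p i); rewrite w_sum1 scale1r.
Qed.

Lemma subset_conv_hull (Y : V -> Prop) y : Y y -> conv_hull Y y.
Proof.
move=> Yy; exists 1%N, (fun=> y), (fun=> 1).
by rewrite !big_ord1 scale1r; do !split => // _; apply: ler01.
Qed.

Lemma conv_hull_dominated (Y : V -> Prop) z :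
  decomp_antichain_convex C Y -> conv_hull Y z ->
  exists2 y, Y y & cone0 C (y - z).
Proof.
move=> [n [S [acS Y_sum]]] [[|m] [x [w [Yx [w_ge0 [w_sum1 ->]]]]]].
  by move: w_sum1; rewrite big_ord0 => /eqP; rewrite eq_sym oner_eq0.
have [P SP] := fin_all_exists (fun j => (Y_sum (x j)).1 (Yx j)).
have [p Sp le_p] :=
  minkowski_sum_combination acS (fun j => (SP j).1) w_ge0 w_sum1.
exists (\sum_i p i); first by apply/Y_sum; exists p.
suff -> : \sum_j w j *: x j = \sum_j w j *: \sum_i P j i by [].
by apply: eq_bigr => j _; rewrite (SP j).2.
Qed.

Variables (Y Z : V -> Prop).
Hypothesis subYZ : forall y, Y y -> Z y.
Hypothesis domZ : forall z, Z z -> exists2 y, Y y & cone0 C (y - z).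

Lemma pareto_opt_sub y : pareto_opt C Z y -> pareto_opt C Y y.
Proof.
move=> [Zy optZ]; split; last by move=> z /subYZ; apply: optZ.
have [y' Yy' [/subr0_eq <- //|Cy'y]] := domZ Zy.
case: (classic (y' = y)) => [<- // | y'_neq_y].
case: (optZ _ (subYZ Yy') y'_neq_y).
by exists (y' - y); split=> //; rewrite addrC subrK.
Qed.

Lemma pareto_opt_sup y : is_pointed C -> pareto_opt C Y y -> pareto_opt C Z y.
Proof.
move=> pointC [Yy optY]; split=> [|z Zz z_neq_y [c [Cc z_def]]]; first exact: subYZ.
have [y' Yy' le_zy'] := domZ Zz.
case: (classic (y' = y)) => [y'_eq_y|y'_neq_y].
  apply: z_neq_y; rewrite z_def (_ : c = 0) ?addr0 //.
  move: le_zy'; rewrite y'_eq_y z_def opprD addrA subrr add0r.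
  by case=> [Nc_eq0 | /(pointC _ Cc) //]; rewrite -[c]opprK Nc_eq0 oppr0.
have : cone0 C (y' - y).
  by move: (cone0D convC le_zy' (or_intror Cc)); rewrite z_def opprD addrA subrK.
case=> [/subr0_eq // | Cy'y]; case: (optY _ Yy' y'_neq_y).
by exists (y' - y); split=> //; rewrite addrC subrK.
Qed.

End Domination.

Theorem theorem5 (R : realType) (V : lmodType R) (C Y : V -> Prop) :
  is_convex_cone C -> decomp_antichain_convex C Y ->
  (forall y, pareto_opt C (conv_hull Y) y -> pareto_opt C Y y) /\
  (is_pointed C -> forall y, pareto_opt C Y y <-> pareto_opt C (conv_hull Y) y).
Proof.
move=> convC decY.
have subY := @subset_conv_hull R V Y.
have domY := fun z => @conv_hull_dominated R V C convC Y z decY.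
split=> [|pointC y]; first exact: pareto_opt_sub subY domY.
by split; [apply: pareto_opt_sup | apply: pareto_opt_sub].
Qed.
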